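(* Let $(\mathcal{F}_n)_{n=0}^\infty$ be a sequence of regular families such that $\mathcal{F}_0$ contains all singleton subsets of $\mathbb{N}$, and let $(\theta_n)_{n=1}^\infty$ be a nonincreasing null sequence in $(0,1)$. Choose a strictly increasing sequence of integers $(m_k)_{k=0}^\infty$ with $m_0=0$ and $\theta_{m_{k+1}}\le \frac12\theta_{m_k}$ for all $k\in\mathbb{N}$. For $n\in\mathbb{N}$ with $m_{k-1}<n\le m_k$, let $\mathcal{G}_n=\{F\in\mathcal{F}_n : k\le F\}\cup\mathcal{S}_0$. Then $T(\mathcal{F}_0,(\theta_n,\mathcal{F}_n)_{n=1}^\infty)$ is isomorphic to $T(\mathcal{F}_0,(\theta_n,\mathcal{G}_n)_{n=1}^\infty)$ via the formal identity (i.e. the two norms are equivalent on $c_{00}$).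
   Context: $[\mathbb{N}]^{<\infty}$ denotes the set of finite subsets of $\mathbb{N}$, topologized as a subspace of $2^{\mathbb{N}}$ with the product topology. For finite $E,F\subseteq\mathbb{N}$, $E<F$ means $\max E<\min F$ and $E\le F$ means $\max E\le\min F$ (with $\max\emptyset=0$, $\min\emptyset=\infty$); $k\le F$ abbreviates $\{k\}\le F$. A family $\mathcal{F}\subseteq[\mathbb{N}]^{<\infty}$ is regular if it is hereditary ($G\subseteq F\in\mathcal{F}\Rightarrow G\in\mathcal{F}$), spreading (if $\{n_1<\dots<n_k\}\in\mathcal{F}$ and $m_1<\dots<m_k$ with $m_i\ge n_i$ for all $i$, then $\{m_1,\dots,m_k\}\in\mathcal{F}$), and compact. $\mathcal{S}_0=\{\{n\}:n\in\mathbb{N}\}\cup\{\emptyset\}$. $c_{00}$ is the space of finitely supported real sequences with unit vectors $(e_k)$; for $x=\sum a_ke_k$ and finite $E$, $Ex=\sum_{k\in E}a_ke_k$, and for a regular $\mathcal{F}$, $\|x\|_{\mathcal{F}}=\sup_{F\in\mathcal{F}}\sum_{k\in F}|a_k|$. A sequence $E_1<\dots<E_k$ of finite sets is $\mathcal{F}$-admissible if $\{\min E_1,\dots,\min E_k\}\in\mathcal{F}$. Given regular families $(\mathcal{F}_n)_{n\ge0}$ with $\mathcal{F}_0$ containing all singletons and a nonincreasing null sequence $(\theta_n)_{n\ge1}$ in $(0,1)$, the mixed Tsirelson space $T(\mathcal{F}_0,(\theta_n,\mathcal{F}_n)_{n=1}^\infty)$ is the completion of $c_{00}$ under the norm implicitly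 defined by $\|x\|=\max\{\|x\|_{\mathcal{F}_0},\ \sup_{n\in\mathbb{N}}\sup\theta_n\sum_{i=1}^k\|E_ix\|\}$, the inner supremum over all $\mathcal{F}_n$-admissible sequences $(E_i)_{i=1}^k$. *)

From HB Require Import structures.
From mathcomp Require Import all_boot all_order all_algebra.
From mathcomp Require Import finmap.
From mathcomp Require Import all_classical all_reals all_analysis.
Set Implicit Arguments. Unset Strict Implicit. Unset Printing Implicit Defensive.
Import Order.TTheory GRing.Theory Num.Theory.
Import numFieldNormedType.Exports.
Local Open Scope classical_set_scope.
Local Open Scope fset_scope.
Local Open Scope ring_scope.

(* Convention: the paper's N = {1,2,3,...}; we use nat and require all
   sets to avoid 0 (and vectors of c00 to vanish at coordinate 0). *)

Definition Nset (E : {fset nat}) : Prop := (0%N \notin E).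

(* E < F : max E < min F (with max empty = 0, min empty = oo) *)
Definition fset_lt (E F : {fset nat}) : bool :=
  [forall a : E, [forall b : F, (val a < val b)%N]].

Definition nat_le_fset (k : nat) (F : {fset nat}) : Prop :=
  forall b, b \in F -> (k <= b)%N.

Definition fmin (E : {fset nat}) : nat := head 0%N (sort leq E).

Definition indic (F : {fset nat}) : cantor_space := fun n => n \in F.

Definition hereditary (fam : set {fset nat}) : Prop :=
  forall F G : {fset nat}, fam F -> G `<=` F -> fam G.

Definition spreading (fam : set {fset nat}) : Prop :=
  forall n m : seq nat, sorted ltn n -> sorted ltn m -> size n = size m ->
    all2 leq n m -> fam [fset x | x in n] -> fam [fset x | x in m].

Definition compact_family (fam : set {fset nat}) : Prop :=
  compact (indic @` fam).

Definition regular (fam : set {fset nat}) : Prop :=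
  (forall F, fam F -> Nset F) /\ hereditary fam /\ spreading fam /\
  compact_family fam.

Definition S0 : set {fset nat} :=
  [set F | F = fset0 \/ exists n, (0 < n)%N /\ F = [fset n]].

Section Norms.
Variable R : realType.

Definition c00 (x : nat -> R) : Prop :=
  finite_set [set k | x k != 0] /\ x 0%N = 0.

Definition restr (E : {fset nat}) (x : nat -> R) : nat -> R :=
  fun k => if k \in E then x k else 0.

Definition famnorm (fam : set {fset nat}) (x : nat -> R) : R :=
  sup [set (\sum_(k <- F) `|x k|) | F in fam].

Definition admissible (fam : set {fset nat}) (s : seq {fset nat}) : Prop :=
  (forall E, E \in s -> E != fset0 /\ Nset E) /\ sorted fset_lt s /\
  fam [fset fmin E | E in s].

Definition mT_step (Fam : nat -> set {fset nat}) (theta : nat -> R)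
  (N : (nat -> R) -> R) (x : nat -> R) : R :=
  Num.max (famnorm (Fam 0%N) x)
    (sup [set theta n.1 * \sum_(E <- n.2) N (restr E x) |
          n in [set n : nat * seq {fset nat} |
                  (0 < n.1)%N /\ admissible (Fam n.1) n.2]]).

(* the mixed Tsirelson norm of T(F_0, (theta_n, F_n)_{n>=1}) on c00:
   the supremum of the increasing iterates N_0 = ||.||_{F_0},
   N_{j+1} = mT_step N_j (the standard construction of the implicit norm) *)
Definition mTnorm (Fam : nat -> set {fset nat}) (theta : nat -> R)
  (x : nat -> R) : R :=
  sup [set iter j (mT_step Fam theta) (famnorm (Fam 0%N)) x | j in [set: nat]].

End Norms.

Definition Gfam (Fam : nat -> set {fset nat}) (m : nat -> nat) (n : nat)
  : set {fset nat} :=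
  if n == 0%N then Fam 0%N else
  setU [set F | Fam n F /\ (forall k, (m k < n <= m k.+1)%N -> nat_le_fset k.+1 F)]
  S0.

(* A G_n-admissible family is either F_n-admissible or has a single member, so,
   as theta_n <= 1, every iterate of the implicit equation defining the G-norm is
   dominated by the corresponding iterate for the F-norm.
   Conversely, let (E_i) be F_n-admissible with m_{k-1} < n <= m_k, and cut every
   E_i at k.  The pieces above k form a G_n-admissible family, because F_n is
   hereditary and spreading; the pieces below k live on coordinates i < k, where
   theta_n <= theta_{m_{k-1}} <= 2^(1-i).  Induction over the iterates gives
   ||x||_F <= ||x||_G + sum_i 2^(1-i) |x_i| <= ||x||_G + 4 ||x||_{F_0} <= 5 ||x||_G. *)

From HB Require Import structures.
From mathcomp Require Import all_boot all_order all_algebra.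
From mathcomp Require Import finmap.
From mathcomp Require Import all_classical all_reals all_analysis.
From mathcomp Require Import ring lra.
Import Order.TTheory GRing.Theory Num.Theory.
Import numFieldNormedType.Exports.
Local Open Scope classical_set_scope.
Local Open Scope ring_scope.
Set Implicit Arguments. Unset Strict Implicit. Unset Printing Implicit Defensive.

Section SupBounds.
Variable R : realType.
Implicit Types (S : set R) (b y : R).

Lemma sup_le_ub_ge0 S b : (forall y, S y -> y <= b) -> 0 <= b -> sup S <= b.
Proof.
move=> Sb b0; have [->|/set0P S0] := eqVneq S set0; first by rewrite sup0.
exact: ge_sup.
Qed.

Lemma sup_ge0 S : (forall y, S y -> 0 <= y) -> 0 <= sup S.
Proof.
move=> S_ge0; have [[[y Sy] ubS]|/sup_out -> //] := pselect (has_sup S).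
exact: le_trans (S_ge0 y Sy) (ub_le_sup ubS Sy).
Qed.

Lemma le_sup_bounded S y b : S y -> (forall z, S z -> z <= b) -> y <= sup S.
Proof. by move=> Sy Sb; apply: ub_le_sup Sy; exists b. Qed.

End SupBounds.

Section Admissibility.
Local Open Scope fset_scope.
Implicit Types (E F : {fset nat}) (Q : set {fset nat}) (s : seq {fset nat}).

Lemma fset_ltP E F :
  reflect (forall a b, a \in E -> b \in F -> (a < b)%N) (fset_lt E F).
Proof.
apply: (iffP forallP) => [lt_EF a b aE bF|lt_EF a].
  exact: (forallP (lt_EF [` aE])) [` bF].
by apply/forallP => b; apply: lt_EF (fsvalP a) (fsvalP b).
Qed.

Lemma fmin_le E e : e \in E -> (fmin E <= e)%N.
Proof.
rewrite /fmin; have := mem_sort leq E; have := sort_sorted leq_total E.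
case: (sort leq E) => [_ memE|a r /(order_path_min leq_trans)/allP le_a memE].
  by rewrite -memE.
by rewrite -memE inE => /predU1P [->|/le_a].
Qed.

Lemma fmin_mem E : E != fset0 -> fmin E \in E.
Proof.
rewrite /fmin; have := mem_sort leq E.
case: (sort leq E) => [memE /fset0Pn [e]|a r memE _]; rewrite -memE //.
exact: mem_head.
Qed.

Lemma fset_lt_fmin E F :
  E != fset0 -> F != fset0 -> fset_lt E F -> (fmin E < fmin F)%N.
Proof. by move=> /fmin_mem minE /fmin_mem minF /fset_ltP; apply. Qed.

Lemma fset_lt_disjoint E F : fset_lt E F -> [disjoint E & F].
Proof.
move=> /fset_ltP lt_EF; apply/fdisjointP => a aE; apply/negP => aF.
by have := lt_EF a a aE aF; rewrite ltnn.
Qed.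

Lemma admissible_pairwise Q s : admissible Q s -> pairwise fset_lt s.
Proof.
move=> [s_ne [s_sorted _]].
have lt_trans : {in [pred E | E != fset0] & &, transitive fset_lt}.
  move=> E F G /fset0Pn [b bE] _ _ /fset_ltP lt_FE /fset_ltP lt_EG.
  apply/fset_ltP => a c aF cG.
  exact: ltn_trans (lt_FE a b aF bE) (lt_EG b c bE cG).
rewrite -(sorted_pairwise_in lt_trans) //.
by apply/allP => E /s_ne [].
Qed.

Lemma admissible_disjoint Q s :
  admissible Q s -> pairwise (fun E F => [disjoint E & F]) s.
Proof. by move=> /admissible_pairwise; apply: sub_pairwise fset_lt_disjoint. Qed.

Lemma admissible_S0 s : admissible S0 s -> (size s <= 1)%N.
Proof.
case: s => [|E1 [|E2 s]] //= adm.
have := admissible_pairwise adm; rewrite /= => /andP [/andP [lt12 _] _].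
have E1s : E1 \in [:: E1, E2 & s] by rewrite mem_head.
have E2s : E2 \in [:: E1, E2 & s] by rewrite !inE eqxx orbT.
have [[E1_ne _] [E2_ne _]] := (adm.1 E1 E1s, adm.1 E2 E2s).
have fmin_in E : E \in [:: E1, E2 & s] ->
    fmin E \in [fset fmin E | E in [:: E1, E2 & s]].
  by move=> Es; apply/imfsetP; exists E.
have := fset_lt_fmin E1_ne E2_ne lt12.
move: (fmin_in _ E1s) (fmin_in _ E2s); case: adm.2.2 => [-> //|[p [_ ->]]].
by rewrite !inE => /eqP -> /eqP ->; rewrite ltnn.
Qed.

Lemma fset_lt_fsubset E F E' F' :
  E' `<=` E -> F' `<=` F -> fset_lt E F -> fset_lt E' F'.
Proof.
move=> /fsubsetP sub_E /fsubsetP sub_F /fset_ltP lt_EF.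
by apply/fset_ltP => a b /sub_E aE /sub_F bF; apply: lt_EF.
Qed.

Lemma pairwise_fmin s : all (fun E => E != fset0) s -> pairwise fset_lt s ->
  pairwise ltn (map fmin s).
Proof.
move=> s_ne; rewrite pairwise_map.
by apply: (sub_in_pairwise (P := [pred E | E != fset0])) => // E F; apply: fset_lt_fmin.
Qed.

Lemma imfset_map (g : {fset nat} -> nat) s :
  [fset y | y in map g s] = [fset g E | E in s].
Proof. by apply/fsetP => k; rewrite inE; apply/mapP/imfsetP. Qed.

Lemma spreading_map Q (g h : {fset nat} -> nat) s :
  spreading Q -> pairwise ltn (map g s) -> pairwise ltn (map h s) ->
  (forall E, E \in s -> (g E <= h E)%N) ->
  Q [fset g E | E in s] -> Q [fset h E | E in s].
Proof.
move=> sprQ lt_g lt_h le_gh; rewrite -!imfset_map.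
apply: sprQ; rewrite ?pairwise_sorted ?size_map //.
elim: s {lt_g lt_h} le_gh => //= E s IH le_gh.
by rewrite le_gh ?mem_head ?IH // => F Fs; rewrite le_gh // inE Fs orbT.
Qed.

Lemma admissible_shrink Q (f : {fset nat} -> {fset nat}) s :
  hereditary Q -> spreading Q -> (forall E, f E `<=` E) ->
  admissible Q s -> admissible Q [seq f E | E <- s & f E != fset0].
Proof.
move=> herQ sprQ f_sub adm; have lt_s := admissible_pairwise adm.
case: adm => [s_ne [_ Q_s]]; set s' := [seq E <- s | f E != fset0].
have s'P E : E \in s' -> E \in s /\ f E != fset0 by rewrite mem_filter => /andP [].
have s'_ne : all (fun E => E != fset0) s' by apply/allP => E /s'P [/s_ne []].
have fs'_ne : all (fun E => E != fset0) (map f s').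
  by apply/allP => _ /mapP [E /s'P [_ fE_ne] ->].
have lt_fs' : pairwise fset_lt (map f s').
  rewrite pairwise_map; apply: sub_pairwise (pairwise_filter _ lt_s) => E F.
  exact: fset_lt_fsubset.
have Q_s' : Q [fset fmin E | E in s'].
  apply: (herQ _ _ Q_s); apply/fsubsetP => _ /imfsetP [E /s'P [Es _] ->].
  by apply/imfsetP; exists E.
split; [|split; first exact: pairwise_sorted].
  move=> _ /mapP [E /s'P [Es fE_ne] ->]; split => //.
  exact: contra (fsubsetP (f_sub E) 0%N) (s_ne E Es).2.
rewrite -imfset_map -map_comp imfset_map.
apply: (spreading_map sprQ (pairwise_fmin s'_ne (pairwise_filter _ lt_s))) Q_s'.
  by rewrite map_comp; apply: pairwise_fmin.
move=> E /s'P [_ fE_ne] /=.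
exact: fmin_le (fsubsetP (f_sub E) _ (fmin_mem fE_ne)).
Qed.

End Admissibility.

Section NonnegativeSums.
Local Open Scope fset_scope.
Local Open Scope ring_scope.
Variables (R : realType) (c : nat -> R).
Hypothesis c_ge0 : forall i, 0 <= c i.

Lemma sum_fsubset_le (A B : {fset nat}) :
  A `<=` B -> \sum_(i <- A) c i <= \sum_(i <- B) c i.
Proof.
move=> /fsubsetP AB; rewrite [leRHS](big_fsetID _ (mem A)) /=.
have -> : [fset i in B | i \in A] = A.
  by apply/fsetP => i; rewrite !inE andb_idl // => /AB.
by rewrite lerDl sumr_ge0.
Qed.

Lemma sum_disjoint_fsetI_le (s : seq {fset nat}) (A : {fset nat}) :
  pairwise (fun E F => [disjoint E & F]) s ->
  \sum_(E <- s) \sum_(i <- E `&` A) c i <= \sum_(i <- A) c i.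
Proof.
elim: s A => [|E s IH] A /=; first by rewrite big_nil sumr_ge0.
move=> /andP [/allP disj_E disj_s]; rewrite big_cons (big_fsetID _ (mem E) A) /=.
apply: lerD.
  by apply: sum_fsubset_le; apply/fsubsetP => i; rewrite !inE => /andP [-> ->].
apply: le_trans (IH [fset i in A | i \notin E] disj_s).
rewrite [leLHS]big_seq [leRHS]big_seq; apply: ler_sum => F Fs.
apply: sum_fsubset_le; apply/fsubsetP => i; rewrite !inE => /andP [iF ->].
by rewrite iF (fdisjointP_sym (disj_E F Fs)).
Qed.

Lemma sum_fset_le_series (S : {fset nat}) M :
  (forall i, i \in S -> (i < M)%N) -> \sum_(i <- S) c i <= series c M.
Proof.
move=> S_lt; rewrite /series /= /index_iota subn0.
have <- : \sum_(i <- [fset i | i in iota 0 M]) c i = \sum_(i <- iota 0 M) c i.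
  by rewrite big_imfset //= undup_id ?iota_uniq.
by apply: sum_fsubset_le; apply/fsubsetP => i /S_lt iM; rewrite inE mem_iota.
Qed.

Lemma sum_drop_fset0 (g : {fset nat} -> R)
    (f : {fset nat} -> {fset nat}) (s : seq {fset nat}) :
  g fset0 = 0 ->
  \sum_(E <- s) g (f E) = \sum_(F <- [seq f E | E <- s & f E != fset0]) g F.
Proof.
move=> g0; rewrite big_map big_filter [RHS]big_mkcond; apply: eq_bigr => E _.
by case: ifPn => // /negPn /eqP ->.
Qed.

End NonnegativeSums.

Section Restrictions.
Local Open Scope fset_scope.
Local Open Scope ring_scope.
Variable R : realType.
Implicit Types (v : nat -> R) (A B C E F : {fset nat}) (Q : set {fset nat}).

Lemma restr_restr E A v : restr E (restr A v) = restr (E `&` A) v.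
Proof. by apply: funext => k; rewrite /restr inE; case: (k \in E). Qed.

Lemma sum_restr F A v :
  \sum_(k <- F) `|restr A v k| = \sum_(k <- F `&` A) `|v k|.
Proof.
rewrite (big_fsetID _ (mem A)) /= [X in _ + X]big1_fset ?addr0; last first.
  by move=> k; rewrite !inE => /andP [_ /negbTE kA] _; rewrite /restr kA normr0.
have -> : [fset k in F | k \in A] = F `&` A by apply/fsetP => k; rewrite !inE.
by apply: eq_big_seq => k; rewrite !inE => /andP [_ kA]; rewrite /restr kA.
Qed.

Lemma famnorm_ge0 Q v : 0 <= famnorm Q v.
Proof. by apply: sup_ge0 => _ [F _ <-]; apply: sumr_ge0. Qed.

Lemma famnorm_restr_le Q A v : famnorm Q (restr A v) <= \sum_(i <- A) `|v i|.
Proof.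
apply: sup_le_ub_ge0 => [_ [F _ <-]|]; last exact: sumr_ge0.
by rewrite sum_restr; apply: sum_fsubset_le => //; apply: fsubsetIr.
Qed.

Lemma le_famnorm_restr Q A F v :
  Q F -> \sum_(k <- F `&` A) `|v k| <= famnorm Q (restr A v).
Proof.
move=> QF; apply: (le_sup_bounded (b := \sum_(i <- A) `|v i|)).
  by exists F; rewrite ?sum_restr.
by move=> _ [G _ <-]; rewrite sum_restr; apply: sum_fsubset_le => //; apply: fsubsetIr.
Qed.

Lemma famnorm_restr_fsubset Q B C v :
  B `<=` C -> famnorm Q (restr B v) <= famnorm Q (restr C v).
Proof.
move=> BC; apply: sup_le_ub_ge0 => [_ [F QF <-]|]; last exact: famnorm_ge0.
rewrite sum_restr; apply: le_trans (le_famnorm_restr C v QF).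
by apply: sum_fsubset_le => //; apply: fsetIS.
Qed.

Lemma famnorm_restrU Q B C v :
  famnorm Q (restr (B `|` C) v) <= famnorm Q (restr B v) + famnorm Q (restr C v).
Proof.
apply: sup_le_ub_ge0 => [_ [F QF <-]|]; last by rewrite addr_ge0 ?famnorm_ge0.
apply: le_trans (lerD (le_famnorm_restr B v QF) (le_famnorm_restr C v QF)).
rewrite -!sum_restr -big_split /=; apply: ler_sum => k _; rewrite /restr inE.
by case: (k \in B); case: (k \in C); rewrite ?normr0 ?addr0 ?add0r ?lerDl.
Qed.

End Restrictions.

Section Iterates.
Local Open Scope fset_scope.
Local Open Scope ring_scope.
Variables (R : realType) (Fam : nat -> set {fset nat}) (theta : nat -> R).
Hypothesis theta01 : forall n, (0 < n)%N -> 0 <= theta n <= 1.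
Implicit Types (v : nat -> R) (A B C E : {fset nat}) (s : seq {fset nat}).

Definition mT_iter (j : nat) : (nat -> R) -> R :=
  iter j (mT_step Fam theta) (famnorm (Fam 0%N)).

Lemma mT_iterS j : mT_iter j.+1 = mT_step Fam theta (mT_iter j).
Proof. by []. Qed.

Lemma mT_iter_ge0 j v : 0 <= mT_iter j v.
Proof. by case: j => [|j]; rewrite ?mT_iterS /mT_step ?le_max famnorm_ge0. Qed.

Lemma famnorm_le_mT_iter j v : famnorm (Fam 0%N) v <= mT_iter j v.
Proof. by case: j => [|j]; rewrite ?mT_iterS /mT_step ?le_max lexx. Qed.

Lemma mT_iterS_le j A v b :
  famnorm (Fam 0%N) (restr A v) <= b ->
  (forall n s, (0 < n)%N -> admissible (Fam n) s ->
     theta n * \sum_(E <- s) mT_iter j (restr (E `&` A) v) <= b) ->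
  mT_iter j.+1 (restr A v) <= b.
Proof.
move=> b_fam b_step; rewrite mT_iterS /mT_step ge_max b_fam /=.
apply: sup_le_ub_ge0 => [_ [[n s] /= [n0 adm] <-]|]; last first.
  exact: le_trans (famnorm_ge0 _ _) b_fam.
by under eq_bigr do rewrite restr_restr; apply: b_step.
Qed.

Lemma step_le_sum (N : (nat -> R) -> R) n s A v :
  (forall B, N (restr B v) <= \sum_(i <- B) `|v i|) ->
  (0 < n)%N -> admissible (Fam n) s ->
  theta n * \sum_(E <- s) N (restr (E `&` A) v) <= \sum_(i <- A) `|v i|.
Proof.
move=> N_le n0 adm; have /andP [theta_ge0 theta_le1] := theta01 n0.
apply: (@le_trans _ _ (theta n * \sum_(i <- A) `|v i|)); last first.
  by rewrite ler_piMl ?sumr_ge0.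
apply: ler_wpM2l => //.
have := sum_disjoint_fsetI_le (fun i => normr_ge0 (v i)) A (admissible_disjoint adm).
apply: le_trans; apply: ler_sum => E _; apply: N_le.
Qed.

Lemma mT_iter_restr_le j A v : mT_iter j (restr A v) <= \sum_(i <- A) `|v i|.
Proof.
elim: j A => [|j IH] A; first exact: famnorm_restr_le.
apply: mT_iterS_le; first exact: famnorm_restr_le.
by move=> n s; apply: step_le_sum.
Qed.

Lemma le_mT_iterS j n s A v : (0 < n)%N -> admissible (Fam n) s ->
  theta n * \sum_(E <- s) mT_iter j (restr (E `&` A) v) <= mT_iter j.+1 (restr A v).
Proof.
move=> n0 adm; rewrite mT_iterS /mT_step le_max; apply/orP; right.
apply: (le_sup_bounded (b := \sum_(i <- A) `|v i|)).
  by exists (n, s) => //=; under eq_bigr do rewrite restr_restr.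
move=> _ [[n' s'] /= [n0' adm'] <-]; under eq_bigr do rewrite restr_restr.
by apply: step_le_sum => // B; apply: mT_iter_restr_le.
Qed.

Lemma mT_iter_restr0 j v : mT_iter j (restr fset0 v) = 0.
Proof.
apply/eqP; rewrite eq_le mT_iter_ge0 andbT.
by apply: le_trans (mT_iter_restr_le _ _ _) _; rewrite big_seq_fset0.
Qed.

Lemma mT_iter_restrU j B C v :
  mT_iter j (restr (B `|` C) v) <= mT_iter j (restr B v) + mT_iter j (restr C v).
Proof.
elim: j B C => [|j IH] B C; first exact: famnorm_restrU.
apply: mT_iterS_le => [|n s n0 adm].
  by apply: le_trans (famnorm_restrU _ _ _ _) (lerD _ _); apply: famnorm_le_mT_iter.
have /andP [theta_ge0 _] := theta01 n0.
apply: le_trans (lerD (le_mT_iterS j B v n0 adm) (le_mT_iterS j C v n0 adm)).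
rewrite -mulrDr -big_split /=; apply: ler_wpM2l => //; apply: ler_sum => E _.
by rewrite fsetIUr; apply: IH.
Qed.

Lemma mT_iter_restr_fsubset j B C v :
  B `<=` C -> mT_iter j (restr B v) <= mT_iter j (restr C v).
Proof.
elim: j B C => [|j IH] B C BC; first exact: famnorm_restr_fsubset.
apply: mT_iterS_le => [|n s n0 adm].
  exact: le_trans (famnorm_restr_fsubset _ _ BC) (famnorm_le_mT_iter _ _).
have /andP [theta_ge0 _] := theta01 n0.
apply: le_trans (le_mT_iterS j C v n0 adm); apply: ler_wpM2l => //.
by apply: ler_sum => E _; apply: IH; apply: fsetIS.
Qed.

Lemma mT_iter_le_succ j A v : mT_iter j (restr A v) <= mT_iter j.+1 (restr A v).
Proof.
elim: j A => [|j IH] A; first exact: famnorm_le_mT_iter.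
apply: mT_iterS_le => [|n s n0 adm]; first exact: famnorm_le_mT_iter.
have /andP [theta_ge0 _] := theta01 n0.
apply: le_trans (le_mT_iterS j.+1 A v n0 adm); apply: ler_wpM2l => //.
by apply: ler_sum => E _; apply: IH.
Qed.

Lemma mT_iter_le_mTnorm j A v :
  mT_iter j (restr A v) <= mTnorm Fam theta (restr A v).
Proof.
apply: (le_sup_bounded (b := \sum_(i <- A) `|v i|)); first by exists j.
by move=> _ [i _ <-]; apply: mT_iter_restr_le.
Qed.

Lemma mTnorm_le v b : (forall j, mT_iter j v <= b) -> 0 <= b -> mTnorm Fam theta v <= b.
Proof. by move=> v_le b0; apply: sup_le_ub_ge0 => // _ [j _ <-]; apply: v_le. Qed.

Lemma mTnorm_restr_ge0 A v : 0 <= mTnorm Fam theta (restr A v).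
Proof. exact: le_trans (mT_iter_ge0 0 (restr A v)) (mT_iter_le_mTnorm 0 A v). Qed.

End Iterates.

Section Subfamilies.
Variables (R : realType) (F G : nat -> set {fset nat}) (theta : nat -> R).
Hypothesis theta01 : forall n, (0 < n)%N -> 0 <= theta n <= 1.
Hypothesis G0 : G 0%N = F 0%N.
Hypothesis G_sub : forall n, (0 < n)%N -> G n `<=` F n `|` S0.

Lemma mT_iter_subfamily_le j A v :
  mT_iter G theta j (restr A v) <= mT_iter F theta j (restr A v).
Proof.
elim: j A => [|j IH] A; first by rewrite /mT_iter /= G0.
apply: mT_iterS_le => [|n s n0 adm]; first by rewrite G0 famnorm_le_mT_iter.
have /andP [theta_ge0 theta_le1] := theta01 n0.
have [Fn_s|S0_s] : admissible (F n) s \/ admissible S0 s.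
  by case: adm => [s_ne [s_sorted /(G_sub n0) [?|?]]]; [left|right].
- apply: le_trans (le_mT_iterS theta01 j A v n0 Fn_s); apply: ler_wpM2l => //.
  by apply: ler_sum => E _; apply: IH.
- move/admissible_S0: S0_s; case: s {adm} => [|E [|//]] _.
    by rewrite big_nil mulr0 mT_iter_ge0.
  rewrite big_seq1; apply: le_trans (ler_piMl (mT_iter_ge0 _ _ _ _) theta_le1) _.
  apply: le_trans (IH _) _; apply: le_trans (mT_iter_le_succ F theta01 j A v).
  exact/(mT_iter_restr_fsubset F theta01)/fsubsetIr.
Qed.

End Subfamilies.

Lemma Gfam_sub (Fam : nat -> set {fset nat}) m n :
  (0 < n)%N -> Gfam Fam m n `<=` Fam n `|` S0.
Proof. by move=> n0; rewrite /Gfam gtn_eqF //; apply: setSU => F []. Qed.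

Section Cuts.
Local Open Scope fset_scope.
Implicit Types (k : nat) (A E : {fset nat}).

Definition fset_upto k E : {fset nat} := [fset i in E | (i <= k)%N].

Definition fset_above k E : {fset nat} := [fset i in E | (k < i)%N].

Lemma fsetI_split k E A :
  E `&` A = (E `&` fset_upto k A) `|` (fset_above k E `&` A).
Proof.
apply/fsetP => i; rewrite !inE ltnNge.
by case: (i \in E); case: (i <= k)%N; case: (i \in A).
Qed.

Lemma fset_aboveIl k E A : fset_above k E `&` A = E `&` fset_above k A.
Proof.
by apply/fsetP => i; rewrite !inE; case: (i \in E); case: (k < i)%N; case: (i \in A).
Qed.

End Cuts.

Section DyadicWeights.
Local Open Scope fset_scope.
Local Open Scope ring_scope.
Variable R : realType.
Implicit Types (v : nat -> R) (A S : {fset nat}).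

Definition dyadic_l1 v A : R := \sum_(i <- A) geometric 2 2^-1 i * `|v i|.

Lemma dyadic_l1_ge0 v A : 0 <= dyadic_l1 v A.
Proof. by apply: sumr_ge0 => i _; rewrite mulr_ge0 // geometric_ge0. Qed.

Lemma dyadic_l1_split v k A :
  dyadic_l1 v A = dyadic_l1 v (fset_upto k A) + dyadic_l1 v (fset_above k A).
Proof.
have -> : fset_above k A = [fset i in A | ~~ (i <= k)%N].
  by apply/fsetP => i; rewrite !inE ltnNge.
by rewrite /dyadic_l1 (big_fsetID _ (fun i => i <= k)%N A).
Qed.

Lemma sum_geometric_half_le S :
  \sum_(i <- S) geometric (2 : R) 2^-1 i <= 4.
Proof.
apply: le_trans (sum_fset_le_series (M := (\max_(i <- S) i).+1) _ _) _.
- by move=> i; rewrite geometric_ge0.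
- by move=> i iS; rewrite ltnS (leq_bigmax_seq (F := id)).
apply: le_trans (geometric_le_lim _ _ _ _) _;
  rewrite ?invr_gt0 ?gtr0_norm ?invf_lt1 ?ltr1n //.
suff -> : 2 / (1 - 2^-1) = 4 :> R by [].
by field.
Qed.

Lemma dyadic_l1_le_famnorm (Q : set {fset nat}) v S :
  (forall n, (0 < n)%N -> Q [fset n]) -> v 0%N = 0 ->
  dyadic_l1 v S <= 4 * famnorm Q (restr S v).
Proof.
move=> Q1 v0; set M := famnorm Q (restr S v).
have v_le i : i \in S -> `|v i| <= M.
  case: (posnP i) => [-> _|i0 iS]; first by rewrite v0 normr0 famnorm_ge0.
  have := le_famnorm_restr S v (Q1 i i0).
  by rewrite (fsetIidPl _) ?fsub1set // big_seq_fset1.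
apply: le_trans (_ : \sum_(i <- S) geometric 2 2^-1 i * M <= _).
  rewrite /dyadic_l1 !big_seq; apply: ler_sum => i iS.
  by rewrite ler_wpM2l ?geometric_ge0 ?v_le.
by rewrite -mulr_suml ler_wpM2r ?famnorm_ge0 ?sum_geometric_half_le.
Qed.

End DyadicWeights.

Section DyadicBlocks.
Local Open Scope fset_scope.
Local Open Scope ring_scope.
Variables (R : realType) (Fam : nat -> set {fset nat}) (theta : nat -> R).
Variable m : nat -> nat.
Hypothesis Fam_hereditary : forall n, hereditary (Fam n).
Hypothesis Fam_spreading : forall n, spreading (Fam n).
Hypothesis theta01 : forall n, (0 < n)%N -> 0 <= theta n <= 1.
Hypothesis theta_noninc : forall n p, (0 < n)%N -> (n <= p)%N -> theta p <= theta n.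
Hypothesis m0 : m 0%N = 0%N.
Hypothesis m_incr : forall k, (m k < m k.+1)%N.
Hypothesis theta_half : forall k, (0 < k)%N -> theta (m k.+1) <= theta (m k) / 2.

Lemma m_block n : (0 < n)%N -> exists k, (m k < n <= m k.+1)%N.
Proof.
move=> n0; have m_ge k : (k <= m k)%N.
  by elim: k => // k IH; apply: leq_ltn_trans IH (m_incr k).
have [k n_le_mk min_k] := ex_minnP (ex_intro (fun k => n <= m k)%N n (m_ge n)).
case: k n_le_mk min_k => [|k] n_le_mk min_k; first by rewrite m0 leqNgt n0 in n_le_mk.
by exists k; rewrite n_le_mk andbT ltnNge; apply/negP => /min_k; rewrite ltnn.
Qed.

Lemma Gfam_tail k n E : (m k < n <= m k.+1)%N ->
  Fam n E -> nat_le_fset k.+1 E -> Gfam Fam m n E.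
Proof.
move=> /andP [mk_n n_mk1] FnE k1_E.
have n0 : (0 < n)%N := leq_ltn_trans (leq0n _) mk_n.
rewrite /Gfam gtn_eqF //; left; split=> // k' /andP [mk'_n n_mk'1].
have m_mono := homo_leq leqnn leq_trans (fun i => ltnW (m_incr i)).
suff -> : k' = k by [].
apply/eqP; rewrite eqn_leq; apply/andP; split; rewrite leqNgt; apply/negP => /m_mono.
  by move/(leq_trans n_mk1); rewrite leqNgt mk'_n.
by move/(leq_trans n_mk'1); rewrite leqNgt mk_n.
Qed.

Lemma admissible_Gfam_tail k n s : (m k < n <= m k.+1)%N ->
  admissible (Fam n) s ->
  admissible (Gfam Fam m n) [seq fset_above k E | E <- s & fset_above k E != fset0].
Proof.
move=> block adm.
have := admissible_shrink (f := fset_above k) (@Fam_hereditary n) (@Fam_spreading n)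
  (fun E => fset_sub E _) adm.
case=> [t_ne [t_sorted Fn_t]]; do 2!split => //.
apply: (Gfam_tail block) => // _ /imfsetP [F Ft ->].
have [F_ne _] := t_ne F Ft; move: (fmin_mem F_ne).
by case/mapP: Ft => E _ -> /imfsetP [i /andP [_ ki] ->].
Qed.

Lemma theta_m_le k : (0 < k)%N -> theta (m k) <= geometric 2 2^-1 k.
Proof.
case: k => // k _; elim: k => [|k IH] /=.
  have m1_gt0 : (0 < m 1)%N by have := m_incr 0; rewrite m0.
  by have /andP [_] := theta01 m1_gt0; rewrite expr1 divff.
apply: le_trans (theta_half _) _ => //.
by rewrite exprS mulrCA mulrC ler_pM2l // invr_gt0.
Qed.

Lemma theta_le_geometric k n i : (m k < n)%N -> (i <= k)%N ->
  theta n <= geometric 2 2^-1 i.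
Proof.
move=> mk_n ik; have n0 : (0 < n)%N := leq_ltn_trans (leq0n _) mk_n.
have geo_le : geometric 2 2^-1 k <= geometric 2 2^-1 i :> R.
  by rewrite /= ler_pM2l // ler_wiXn2l // invr_le1 // ?ler1n // unitf_gt0.
case: k mk_n ik geo_le => [|k] mk_n ik geo_le.
  have /andP [_ theta_le1] := theta01 n0; apply: le_trans theta_le1 (le_trans _ geo_le).
  by rewrite /= expr0 mulr1 ler1n.
have mk_gt0 : (0 < m k.+1)%N by apply: leq_ltn_trans (leq0n _) (m_incr k).
exact: le_trans (theta_noninc mk_gt0 (ltnW mk_n)) (le_trans (theta_m_le _) geo_le).
Qed.

Lemma low_part_le k n s A v : (m k < n)%N ->
  pairwise (fun E F => [disjoint E & F]) s ->
  theta n * \sum_(E <- s) \sum_(i <- E `&` fset_upto k A) `|v i|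
    <= dyadic_l1 v (fset_upto k A).
Proof.
move=> mk_n disj_s; have n0 : (0 < n)%N := leq_ltn_trans (leq0n _) mk_n.
have /andP [theta_ge0 _] := theta01 n0.
have := sum_disjoint_fsetI_le (fun i => normr_ge0 (v i)) (fset_upto k A) disj_s.
move=> /(ler_wpM2l theta_ge0) /le_trans; apply.
rewrite mulr_sumr /dyadic_l1 !big_seq; apply: ler_sum => i.
rewrite !inE => /andP [_ ik].
by apply: ler_wpM2r => //; apply: theta_le_geometric mk_n ik.
Qed.

Section Induction.
Variable j : nat.
Hypothesis IH : forall B v, mT_iter Fam theta j (restr B v)
  <= mT_iter (Gfam Fam m) theta j (restr B v) + dyadic_l1 v B.

Lemma high_part_le k n s A v : (m k < n <= m k.+1)%N -> admissible (Fam n) s ->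
  theta n * \sum_(E <- s) mT_iter Fam theta j (restr (fset_above k E `&` A) v)
    <= mT_iter (Gfam Fam m) theta j.+1 (restr A v) + dyadic_l1 v (fset_above k A).
Proof.
move=> block adm.
have n0 : (0 < n)%N by case/andP: block => /(leq_ltn_trans (leq0n _)).
have /andP [theta_ge0 theta_le1] := theta01 n0.
rewrite (sum_drop_fset0 (g := fun F => mT_iter Fam theta j (restr (F `&` A) v)));
  last by rewrite fset0I mT_iter_restr0.
apply: le_trans (ler_wpM2l theta_ge0 (ler_sum _ (fun F _ => IH (F `&` A) v))) _.
rewrite big_split /= -mT_iterS mulrDr; apply: lerD.
  exact/(le_mT_iterS theta01 j A v n0)/(admissible_Gfam_tail block).
apply: le_trans (ler_piMl (sumr_ge0 _ (fun F _ => dyadic_l1_ge0 _ _)) theta_le1) _.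
rewrite -(sum_drop_fset0 (g := fun F => dyadic_l1 v (F `&` A)));
  last by rewrite fset0I /dyadic_l1 big_seq_fset0.
under eq_bigr do rewrite fset_aboveIl.
apply: (sum_disjoint_fsetI_le _ _ (admissible_disjoint adm)) => i.
by rewrite mulr_ge0 // geometric_ge0.
Qed.

Lemma step_le_Gfam n s A v : (0 < n)%N -> admissible (Fam n) s ->
  theta n * \sum_(E <- s) mT_iter Fam theta j (restr (E `&` A) v)
    <= mT_iter (Gfam Fam m) theta j.+1 (restr A v) + dyadic_l1 v A.
Proof.
move=> n0 adm; have [k block] := m_block n0.
have /andP [theta_ge0 _] := theta01 n0.
have split_E E : mT_iter Fam theta j (restr (E `&` A) v)
    <= \sum_(i <- E `&` fset_upto k A) `|v i|
       + mT_iter Fam theta j (restr (fset_above k E `&` A) v).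
  rewrite (fsetI_split k); apply: le_trans (mT_iter_restrU Fam theta01 _ _ _ _) _.
  by rewrite lerD2r mT_iter_restr_le.
apply: le_trans (ler_wpM2l theta_ge0 (ler_sum _ (fun E _ => split_E E))) _.
rewrite big_split /= -mT_iterS mulrDr (dyadic_l1_split v k A) addrCA.
apply: lerD; last exact: high_part_le.
by apply: low_part_le (admissible_disjoint adm); case/andP: block.
Qed.

End Induction.

Lemma mT_iter_le_Gfam j A v :
  mT_iter Fam theta j (restr A v)
    <= mT_iter (Gfam Fam m) theta j (restr A v) + dyadic_l1 v A.
Proof.
elim: j A v => [|j IH] A v; first by rewrite lerDl dyadic_l1_ge0.
apply: mT_iterS_le => [|n s n0 adm]; last exact: step_le_Gfam.
apply: le_trans (famnorm_le_mT_iter (Gfam Fam m) theta j.+1 _) _.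
by rewrite lerDl dyadic_l1_ge0.
Qed.

End DyadicBlocks.

Lemma c00_restr (R : realType) (x : nat -> R) :
  c00 x -> exists S : {fset nat}, x = restr S x.
Proof.
move=> [/finite_fsetP [S suppS] _]; exists S; apply: funext => k.
rewrite /restr; case: ifPn => // kS; apply/eqP; apply: contraNT kS => xk.
by have : [set k | x k != 0] k by []; rewrite suppS.
Qed.

Theorem proposition1 (R : realType) (Fam : nat -> set {fset nat})
  (theta : nat -> R) (m : nat -> nat) :
  (forall n, regular (Fam n)) ->
  (forall n, (0 < n)%N -> Fam 0%N [fset n]%fset) ->
  (forall n, (0 < n)%N -> 0 < theta n < 1) ->
  (forall n p, (0 < n)%N -> (n <= p)%N -> theta p <= theta n) ->
  theta @ \oo --> (0 : R) ->
  m 0%N = 0%N ->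
  (forall k, (m k < m k.+1)%N) ->
  (forall k, (0 < k)%N -> theta (m k.+1) <= theta (m k) / 2) ->
  exists c C : R, 0 < c /\ 0 < C /\
    forall x : nat -> R, c00 x ->
      c * mTnorm Fam theta x <= mTnorm (Gfam Fam m) theta x /\
      mTnorm (Gfam Fam m) theta x <= C * mTnorm Fam theta x.
Proof.
move=> Fam_regular Fam0_singletons theta_bounds theta_noninc _ m0 m_incr theta_half.
have theta01 n : (0 < n)%N -> 0 <= theta n <= 1.
  by move/theta_bounds => /andP [theta_gt0 theta_lt1]; rewrite !ltW.
have Fam_hereditary n : hereditary (Fam n) by have [_ []] := Fam_regular n.
have Fam_spreading n : spreading (Fam n) by have [_ [_ []]] := Fam_regular n.
exists 5^-1, 1; split=> //; split=> // x x_c00; have [S ->] := c00_restr x_c00.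
set NF := mTnorm Fam theta (restr S x); set NG := mTnorm (Gfam Fam m) theta (restr S x).
have NF_le : NF <= NG + dyadic_l1 x S.
  apply: mTnorm_le => [j|]; last by rewrite addr_ge0 ?mTnorm_restr_ge0 ?dyadic_l1_ge0.
  apply: le_trans (mT_iter_le_Gfam Fam_hereditary Fam_spreading theta01 theta_noninc
    m0 m_incr theta_half j S x) _.
  by rewrite lerD2r mT_iter_le_mTnorm.
have dyadic_le : dyadic_l1 x S <= 4 * famnorm (Fam 0%N) (restr S x).
  exact: dyadic_l1_le_famnorm Fam0_singletons x_c00.2.
have famnorm_le : famnorm (Fam 0%N) (restr S x) <= NG :=
  mT_iter_le_mTnorm (Gfam Fam m) theta01 0 S x.
split; first lra.
rewrite mul1r; apply: mTnorm_le => [j|]; last exact: mTnorm_restr_ge0.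
apply: le_trans (mT_iter_le_mTnorm Fam theta01 j S x).
exact: (mT_iter_subfamily_le (F := Fam) (G := Gfam Fam m) theta01 erefl
  (@Gfam_sub Fam m)).
Qed.
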